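(* Let $n\ge 3$. The maps $A,B,C,D,E$ defined below are injective, their images are faces of $\Delta_{n+1}$, and the set of faces of $\Delta_{n+1}$ is the disjoint union of the images of $A$, $B$, $C$, $D$, $E$. Moreover, for each fixed $i\in\{2,\dots,n\}$, the image $\{E(F,i):F\in\Delta_n\}$ equals the set of faces of $\Delta_{n+1}$ containing the vertex $\{i,n+1\}$, it is isomorphic as a poset (under inclusion) to the face poset of $\Delta_n$, and it is an upper order ideal in the face poset of $\Delta_{n+1}$.
   Context: The Whitehouse complex $\Delta_n$ ($n\ge 3$) is the simplicial complex with vertex set $V_n=\{S\subseteq\{2,\dots,n\}: 2\le |S|\le n-2\}$, in which a subset $F\subseteq V_n$ is a face iff for all $S,T\in F$ one has $S\subseteq T$, $T\subseteq S$, or $S\cap T=\emptyset$. (So $\Delta_3=\{\emptyset\}$.) Its face poset is the set of its faces (including $\emptyset$) ordered by inclusion. For a face $F$ of $\Delta_n$ define: $A(F)=F$; $B(F)=F\cup\{\{2,\dots,n\}\}$; for $S\in F$, $C(F,S)=\{T\cup\{n+1\}: T\in F, S\subseteq T\}\cup\{T: T\in F, S\not\subseteq T\}$ and $D(F,S)=C(F,S)\cup\{S\}$; for $2\le i\le n$, $E(F,i)=\{\{i,n+1\}\}\cup\{T\cup\{n+1\}: T\in F, i\in T\}\cup\{T: T\in F, i\notin T\}$. Here $A,B$ have domain the faces of $\Delta_n$, $C,D$ have domain the pairs $(F,S)$ with $F$ a face and $S\in F$, and $E$ has domain the pairs $(F,i)$ with $F$ a face and $2\le i\le n$. *)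

(* Vertices of Delta_m are represented as finite sets of
   ordinals 'I_N (N large enough, in practice N = n.+2 so that both Delta_n
   and Delta_{n+1} live in the same type), faces as finite sets of vertices. *)
From mathcomp Require Import all_boot.
Set Implicit Arguments. Unset Strict Implicit. Unset Printing Implicit Defensive.

Definition wvert (m N : nat) (S : {set 'I_N}) : bool :=
  [forall x in S, 2 <= x <= m] && (2 <= #|S| <= m - 2).

Definition wcompat (N : nat) (S T : {set 'I_N}) : bool :=
  [|| S \subset T, T \subset S | [disjoint S & T]].

Definition wface (m N : nat) (F : {set {set 'I_N}}) : bool :=
  [forall S in F, wvert m S] && [forall S in F, forall T in F, wcompat S T].

(* The maps A,B,C,D,E from faces of Delta_n to faces of Delta_{n+1};
   the element n+1 is ord_max : 'I_n.+2. *)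
Definition mapA (n : nat) (F : {set {set 'I_n.+2}}) : {set {set 'I_n.+2}} := F.

Definition mapB (n : nat) (F : {set {set 'I_n.+2}}) : {set {set 'I_n.+2}} :=
  F :|: [set [set x : 'I_n.+2 | 2 <= x <= n]].

Definition mapC (n : nat) (F : {set {set 'I_n.+2}}) (S : {set 'I_n.+2})
  : {set {set 'I_n.+2}} :=
  [set T :|: [set ord_max] | T in F & S \subset T]
  :|: [set T in F | ~~ (S \subset T)].

Definition mapD (n : nat) (F : {set {set 'I_n.+2}}) (S : {set 'I_n.+2})
  : {set {set 'I_n.+2}} :=
  mapC F S :|: [set S].

Definition mapE (n : nat) (F : {set {set 'I_n.+2}}) (i : 'I_n.+2)
  : {set {set 'I_n.+2}} :=
  [set [set i; ord_max]]
  :|: [set T :|: [set ord_max] | T in F & i \in T]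
  :|: [set T in F | i \notin T].

Inductive label := LA | LB | LC | LD | LE.

Definition inImage (n : nat) (l : label) (G : {set {set 'I_n.+2}}) : Prop :=
  match l with
  | LA => exists F, wface n F /\ G = mapA F
  | LB => exists F, wface n F /\ G = mapB F
  | LC => exists F S, [/\ wface n F, S \in F & G = mapC F S]
  | LD => exists F S, [/\ wface n F, S \in F & G = mapD F S]
  | LE => exists F (i : 'I_n.+2), [/\ wface n F, 2 <= i <= n & G = mapE F i]
  end.

Definition imgE (n : nat) (i : 'I_n.+2) (G : {set {set 'I_n.+2}}) : Prop :=
  exists F, wface n F /\ G = mapE F i.

From mathcomp Require Import all_boot zify.
Set Implicit Arguments. Unset Strict Implicit. Unset Printing Implicit Defensive.

(* A face G of Delta_{n+1} in which no vertex contains n+1 is a face of Delta_n, possibly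
   together with the vertex {2,...,n}: these are the images of A and B. Otherwise the
   vertices of G containing n+1 pairwise meet, so they form a chain; its least element
   M = S u {n+1} is the apex of G. Removing n+1 from every vertex of G recovers F (together
   with S), and C(F,S), D(F,S) and E(F,i) = C(F u {{i}}, {i}) are rebuilt from F and S.
   Apex and removal are left inverses of C, D and E, and the label of the image containing
   G is read off G: whether n+1 occurs, whether |M| = 2, whether S or {2,...,n} is in G. *)

Lemma setU1_inj (T : finType) (x : T) (A B : {set T}) :
  x \notin A -> x \notin B -> A :|: [set x] = B :|: [set x] -> A = B.
Proof. by move=> xA xB /(congr1 (fun C => C :\ x)); rewrite !(setUC _ [set x]) !setU1K. Qed.

Lemma setD1_id (T : finType) (x : T) (A : {set T}) : x \notin A -> A :\ x = A.
Proof. by move=> xA; apply/setDidPl; rewrite disjoint_sym disjoints1. Qed.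

Lemma nondisjoint_sub (T : finType) (S A B : {set T}) :
  S != set0 -> S \subset A -> S \subset B -> ~~ [disjoint A & B].
Proof.
case/set0Pn => z zS SA SB; rewrite -setI_eq0; apply/set0Pn.
by exists z; rewrite inE (subsetP SA) ?(subsetP SB).
Qed.

Lemma bigcap_least (I T : finType) (P : pred I) (F : I -> {set T}) j :
  P j -> (forall i, P i -> F j \subset F i) -> \bigcap_(i | P i) F i = F j.
Proof. by move=> Pj Fj; apply/eqP; rewrite eqEsubset bigcap_inf //=; apply/bigcapsP. Qed.

Lemma card_interval N m : m < N -> #|[set x : 'I_N | 2 <= x <= m]| = m - 1.
Proof.
elim: m => [|m IH] ltmN.
  by apply/eqP; rewrite cards_eq0; apply/eqP/setP => x; rewrite !inE; lia.
case: m IH ltmN => [|m] IH ltmN.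
  by apply/eqP; rewrite cards_eq0; apply/eqP/setP => x; rewrite !inE; lia.
have -> : [set x : 'I_N | 2 <= x <= m.+2] = Ordinal ltmN |: [set x : 'I_N | 2 <= x <= m.+1].
  by apply/setP => x; rewrite !inE -val_eqE /=; lia.
by rewrite cardsU1 IH ?inE /=; lia.
Qed.

Lemma wvertP m N (S : {set 'I_N}) :
  reflect ((forall x, x \in S -> 2 <= x <= m) /\ 2 <= #|S| <= m - 2) (wvert m S).
Proof.
apply: (iffP andP) => [[/forall_inP Sm cardS] | [Sm cardS]]; split => //.
exact/forall_inP.
Qed.

Lemma wfaceP m N (F : {set {set 'I_N}}) :
  reflect ({in F, forall S, wvert m S} /\ {in F &, forall S T, wcompat S T}) (wface m F).
Proof.
apply: (iffP andP) => [[/forall_inP Fv /forall_inP Fc] | [Fv Fc]]; split => //.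
- by move=> S T /Fc /forall_inP; apply.
- exact/forall_inP.
- by apply/forall_inP => S SF; apply/forall_inP => T; apply: Fc.
Qed.

Lemma face_vert m N (F : {set {set 'I_N}}) : wface m F -> {in F, forall S, wvert m S}.
Proof. by case/wfaceP. Qed.

Lemma face_compat m N (F : {set {set 'I_N}}) : wface m F -> {in F &, forall S T, wcompat S T}.
Proof. by case/wfaceP. Qed.

Lemma wcompatC N (S T : {set 'I_N}) : wcompat S T = wcompat T S.
Proof. by rewrite /wcompat disjoint_sym orbCA. Qed.

Lemma wcompat1 N (i : 'I_N) (T : {set 'I_N}) : wcompat [set i] T.
Proof.
apply/or3P; case: (boolP (i \in T)) => iT; first by apply: Or31; rewrite sub1set.
by apply: Or33; rewrite disjoints1.
Qed.

Lemma wcompatD1 N (S T : {set 'I_N}) a : wcompat S T -> wcompat (S :\ a) (T :\ a).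
Proof.
case/or3P => [ST | TS | dST]; apply/or3P.
- by apply: Or31; apply: setSD.
- by apply: Or32; apply: setSD.
- by apply: Or33; apply: disjointWl (subsetDl _ _) (disjointWr (subsetDl _ _) dST).
Qed.

Lemma wcompatU1 N (S T : {set 'I_N}) a :
  wcompat S T -> ~~ [disjoint S & T] -> wcompat (S :|: [set a]) (T :|: [set a]).
Proof.
case/or3P => [ST | TS | ->] // _; apply/or3P.
- by apply: Or31; apply: setSU.
- by apply: Or32; apply: setSU.
Qed.

Lemma wcompatU1l N (S T : {set 'I_N}) a :
  a \notin T -> wcompat S T -> ~~ (S \subset T) -> wcompat (S :|: [set a]) T.
Proof.
move=> aT /or3P [-> // | TS | dST] _; apply/or3P.
- by apply: Or32; apply: subsetU; rewrite TS.
- by apply: Or33; move: dST; rewrite !disjoints_subset subUset sub1set inE => ->.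
Qed.

Lemma wcompat_setU1 N (F : {set {set 'I_N}}) S :
  {in F &, forall T U, wcompat T U} -> {in F, forall T, wcompat S T} ->
  {in F :|: [set S] &, forall T U, wcompat T U}.
Proof.
move=> Fc FS T U /setUP [TF | /set1P ->] /setUP [UF | /set1P ->].
- exact: Fc.
- by rewrite wcompatC FS.
- exact: FS.
- by rewrite /wcompat subxx.
Qed.

Lemma wfaceU1 m N (F : {set {set 'I_N}}) S :
  wface m F -> wvert m S -> {in F, forall T, wcompat S T} -> wface m (F :|: [set S]).
Proof.
case/wfaceP => Fv Fc Sv FS; apply/wfaceP; split; last exact: wcompat_setU1.
by move=> T /setUP [/Fv | /set1P ->].
Qed.

Section Whitehouse.
Variable n : nat.

Local Notation vset := {set 'I_n.+2}.
Local Notation omax := (@ord_max n.+1).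
Local Notation ground := [set x : 'I_n.+2 | 2 <= x <= n].

Definition has_omax (G : {set vset}) : bool := [exists T in G, omax \in T].

Definition apex (G : {set vset}) : vset := \bigcap_(T in G | omax \in T) T.

Definition unlift (G : {set vset}) : {set vset} := [set T :\ omax | T in G].

(* [raise F S] is C(F u {S}, S), which makes sense also when S is not a vertex of F;
   in particular E(F, i) = [raise F [set i]]. *)
Definition raise (F : {set vset}) (S : vset) : {set vset} :=
  [set T :|: [set omax] | T in F :|: [set S] & S \subset T]
  :|: [set T in F | ~~ (S \subset T)].

Definition kind (G : {set vset}) : label :=
  if has_omax G then
    if #|apex G| == 2 then LE else if apex G :\ omax \in G then LD else LC
  else if ground \in G then LB else LA.

Lemma card_ground : #|ground| = n - 1.
Proof. exact: card_interval. Qed.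

Lemma omax_setU1 (T : vset) : omax \in T :|: [set omax].
Proof. by rewrite !inE eqxx orbT. Qed.

Lemma setU1_omaxK (T : vset) : omax \notin T -> (T :|: [set omax]) :\ omax = T.
Proof. by move=> omaxT; rewrite setUC setU1K. Qed.

Lemma ord_omax (i : 'I_n.+2) : 2 <= i <= n -> i != omax.
Proof. by rewrite -val_eqE /=; lia. Qed.

Lemma set2_omax_inj (i j : 'I_n.+2) : 2 <= i <= n -> 2 <= j <= n ->
  [set i; omax] = [set j; omax] -> i = j.
Proof.
move=> i_n j_n /(@setU1_inj _ omax) ij.
by apply/set1_inj/ij; rewrite in_set1 eq_sym ord_omax.
Qed.

Lemma wvert_omax (T : vset) : wvert n T -> omax \notin T.
Proof. by case/wvertP => Tn _; apply/negP => /Tn /=; lia. Qed.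

Lemma wvert_sub_ground (T : vset) : wvert n T -> T \subset ground.
Proof. by case/wvertP => Tn _; apply/subsetP => x /Tn; rewrite inE. Qed.

Lemma wvert_succ (T : vset) : wvert n T -> wvert n.+1 T.
Proof. by case/wvertP => Tn cardT; apply/wvertP; split => [x /Tn|]; lia. Qed.

Lemma wvert_succU1 (T : vset) : wvert n T -> wvert n.+1 (T :|: [set omax]).
Proof.
move=> Tv; have omaxT := wvert_omax Tv; case/wvertP: Tv => Tn cardT.
apply/wvertP; split; last by rewrite setUC cardsU1 omaxT; lia.
by move=> x /setUP [/Tn | /set1P ->] /=; lia.
Qed.

Lemma wvert_setD1_ground (T : vset) : wvert n.+1 T -> T :\ omax \subset ground.
Proof.
case/wvertP => Tn _; apply/subsetP => x /setD1P [x_omax /Tn].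
by rewrite inE; move: x_omax; rewrite -val_eqE /=; lia.
Qed.

Lemma wvert_unlift (T : vset) :
  wvert n.+1 T -> T != ground -> 2 <= #|T :\ omax| -> wvert n (T :\ omax).
Proof.
move=> Tv Tground cardT'; have sub_ground := wvert_setD1_ground Tv.
case/wvertP: Tv => _ cardT; apply/wvertP; split.
  by move=> x /(subsetP sub_ground); rewrite inE.
rewrite cardT' /=; case: (boolP (omax \in T)) => omaxT.
  by move: cardT; rewrite (cardsD1 omax T) omaxT; move: #|_ :\ _| => k; lia.
rewrite setD1_id // in sub_ground *.
have : T \proper ground by rewrite properEneq Tground sub_ground.
by move/proper_card; rewrite card_ground; move: #|T| => k; lia.
Qed.

Lemma face_omax (F : {set vset}) : wface n F -> {in F, forall T : vset, omax \notin T}.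
Proof. by move=> Ff T /(face_vert Ff) /wvert_omax. Qed.

Lemma ground_notin_face (F : {set vset}) : wface n F -> ground \notin F.
Proof. by move=> Ff; apply/negP => /(face_vert Ff) /wvertP [_]; rewrite card_ground; lia. Qed.

Lemma set1_notin_face (F : {set vset}) (i : 'I_n.+2) : wface n F -> [set i] \notin F.
Proof. by move=> Ff; apply/negP => /(face_vert Ff) /wvertP [_]; rewrite cards1. Qed.

Lemma wface_succ (F : {set vset}) : wface n F -> wface n.+1 F.
Proof. by case/wfaceP => Fv Fc; apply/wfaceP; split => // T /Fv /wvert_succ. Qed.

Lemma has_omaxS (G H : {set vset}) : G \subset H -> has_omax G -> has_omax H.
Proof.
by move=> GH /exists_inP [T TG omaxT]; apply/exists_inP; exists T; rewrite ?(subsetP GH).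
Qed.

Lemma has_omax_face (F : {set vset}) : wface n F -> ~~ has_omax F.
Proof. by move=> Ff; apply/exists_inP => [[T /(face_omax Ff) /negP]]. Qed.

Lemma apex_sub (G : {set vset}) T : T \in G -> omax \in T -> apex G \subset T.
Proof. by move=> TG omaxT; apply: bigcap_inf; rewrite TG. Qed.

Lemma mem_unlift (G : {set vset}) (y : vset) :
  omax \notin y -> (y \in unlift G) = (y \in G) || (y :|: [set omax] \in G).
Proof.
move=> y_omax; apply/imsetP/orP => [[T TG ->] | [yG | yG]].
- by case: (boolP (omax \in T)) => omaxT; [right; rewrite setUC setD1K | left; rewrite setD1_id].
- by exists y; rewrite // setD1_id.
- by exists (y :|: [set omax]); rewrite // setU1_omaxK.
Qed.

Lemma unlift_omax (G : {set vset}) : {in unlift G, forall y : vset, omax \notin y}.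
Proof. by move=> _ /imsetP [T _ ->]; rewrite setD11. Qed.

Lemma raiseP (F : {set vset}) (S x : vset) : x \in raise F S ->
  (exists2 T, T \in F :|: [set S] & S \subset T /\ x = T :|: [set omax])
  \/ (x \in F /\ ~~ (S \subset x)).
Proof.
case/setUP => [/imsetP [T] | ]; rewrite in_set => /andP [? ?]; last by right.
by move=> ->; left; exists T.
Qed.

Lemma has_omax_raise (F : {set vset}) (S : vset) : has_omax (raise F S).
Proof.
apply/exists_inP; exists (S :|: [set omax]); last exact: omax_setU1.
by apply/setUP; left; apply/imsetP; exists S; rewrite // in_set !inE eqxx orbT subxx.
Qed.

Lemma raiseS (F1 F2 : {set vset}) (S : vset) : F1 \subset F2 -> raise F1 S \subset raise F2 S.
Proof.
move=> F12; apply: setUSS; first apply: imsetS; apply/subsetP => T; rewrite !in_set.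
  by case/andP => /orP [/(subsetP F12) -> | ->] ->; rewrite ?orbT.
by case/andP => /(subsetP F12) -> ->.
Qed.

Lemma raise_setD1 (F : {set vset}) (S : vset) : raise (F :\ S) S = raise F S.
Proof.
rewrite /raise; have -> : F :\ S :|: [set S] = F :|: [set S].
  by apply/setP => T; rewrite !inE; case: eqP => [-> | _]; rewrite ?eqxx ?orbT ?orbF.
by congr (_ :|: _); apply/setP => T; rewrite !inE; case: eqP => [-> | _]; rewrite ?subxx ?andbF.
Qed.

Lemma mapC_raise (F : {set vset}) (S : vset) : S \in F -> mapC F S = raise F S.
Proof. by move=> SF; rewrite /raise (setUidPl (_ : [set S] \subset F)) // sub1set. Qed.

Lemma mapE_raise (F : {set vset}) (i : 'I_n.+2) : mapE F i = raise F [set i].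
Proof.
rewrite /mapE /raise; congr (_ :|: _); last by apply/setP => T; rewrite !inE sub1set.
have -> : [set T in F :|: [set [set i]] | [set i] \subset T] = [set i] |: [set T in F | i \in T].
  apply/setP => T; rewrite !inE sub1set.
  by case: eqP => [-> | _]; rewrite ?set11 ?andbT ?orbT ?orbF.
by rewrite imsetU1.
Qed.

Lemma raise_face (F : {set vset}) (S : vset) :
  wface n F -> omax \notin S -> wvert n.+1 (S :|: [set omax]) ->
  {in F, forall T, wcompat S T} -> wface n.+1 (raise F S).
Proof.
case/wfaceP => Fv Fc S_omax Sv FS; have FSc := wcompat_setU1 Fc FS.
have S_neq0 : S != set0.
  by apply: contraTneq Sv => ->; rewrite set0U; apply/negP => /wvertP [_]; rewrite cards1.
have lifted_compat T y : T \in F :|: [set S] -> S \subset T -> y \in F -> ~~ (S \subset y) ->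
    wcompat (T :|: [set omax]) y.
  move=> TFS ST yF Sy; apply: wcompatU1l; first exact: wvert_omax (Fv _ yF).
    by apply: FSc; rewrite // inE yF.
  by apply: contra Sy; apply: subset_trans.
apply/wfaceP; split.
  move=> x /raiseP [[T /setUP [TF | /set1P ->] [_ ->]] // | [/Fv /wvert_succ //]].
  exact: wvert_succU1 (Fv _ TF).
move=> x y /raiseP [[T TFS [ST ->]] | [xF Sx]] /raiseP [[U UFS [SU ->]] | [yF Sy]].
- by apply: wcompatU1; [apply: FSc | apply: nondisjoint_sub S_neq0 ST SU].
- exact: lifted_compat.
- by rewrite wcompatC; apply: lifted_compat.
- exact: Fc.
Qed.

Section Raise.
Variables (F : {set vset}) (S : vset).
Hypotheses (F_omax : {in F, forall T : vset, omax \notin T}) (S_omax : omax \notin S).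

Lemma mem_raise x :
  (x \in raise F S) = if omax \in x then (x :\ omax \in F :|: [set S]) && (S \subset x :\ omax)
                      else (x \in F) && ~~ (S \subset x).
Proof.
apply/idP/idP.
- case/raiseP => [[T TFS [ST ->]] | [xF Sx]]; last by rewrite (negbTE (F_omax xF)) xF.
  by rewrite omax_setU1 setU1_omaxK ?TFS //; case/setUP: TFS => [/F_omax | /set1P ->].
- case: ifP => x_omax /andP [xFS Sx]; apply/setUP; [left | by right; rewrite inE xFS].
  by apply/imsetP; exists (x :\ omax); [rewrite in_set xFS | rewrite setUC setD1K].
Qed.

Lemma S_notin_raise : S \notin raise F S.
Proof. by rewrite mem_raise (negbTE S_omax) subxx andbF. Qed.

Lemma unlift_raise : unlift (raise F S) = F :|: [set S].
Proof.
apply/setP => T; apply/imsetP/idP => [[x] | TFS].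
  rewrite mem_raise; case: ifP => [_ /andP [? _] -> // | _ /andP [xF _] ->].
  by rewrite setD1_id ?F_omax // inE xF.
have T_omax : omax \notin T by move: TFS => /setUP [/F_omax | /set1P ->].
case: (boolP (S \subset T)) => ST.
  exists (T :|: [set omax]); last by rewrite setU1_omaxK.
  by rewrite mem_raise omax_setU1 setU1_omaxK // TFS.
exists T; last by rewrite setD1_id.
rewrite mem_raise (negbTE T_omax) ST andbT.
by move: TFS => /setUP [// | /set1P eTS]; rewrite eTS subxx in ST.
Qed.

Lemma apex_raise : apex (raise F S) = S :|: [set omax].
Proof.
rewrite /apex (bigcap_least (j := S :|: [set omax])) //.
  by rewrite mem_raise omax_setU1 setU1_omaxK // !inE eqxx orbT subxx.
move=> x /andP []; rewrite mem_raise => /[swap] x_omax; rewrite x_omax => /andP [_ Sx].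
by rewrite -(setD1K x_omax) setUC setUS.
Qed.

End Raise.

Hypothesis n_ge3 : 3 <= n.

Lemma wvert_ground : wvert n.+1 ground.
Proof. by apply/wvertP; rewrite card_ground; split => [x|]; rewrite ?inE; lia. Qed.

Lemma wvert_pair (i : 'I_n.+2) : 2 <= i <= n -> wvert n.+1 [set i; omax].
Proof.
move=> i_n; apply/wvertP; rewrite cards2 ord_omax //; split; last by lia.
by move=> x /set2P [-> | ->] /=; lia.
Qed.

Section Images.
Variable F : {set vset}.
Hypothesis F_face : wface n F.

Let F_omax : {in F, forall T : vset, omax \notin T}.
Proof. exact: face_omax. Qed.

Lemma wface_mapB : wface n.+1 (mapB F).
Proof.
apply: wfaceU1 (wface_succ F_face) wvert_ground _ => T TF.
by rewrite wcompatC /wcompat wvert_sub_ground ?(face_vert F_face).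
Qed.

Lemma kind_mapA : kind (mapA F) = LA.
Proof. by rewrite /kind (negbTE (has_omax_face F_face)) (negbTE (ground_notin_face F_face)). Qed.

Lemma kind_mapB : kind (mapB F) = LB.
Proof.
rewrite /kind /mapB !inE eqxx orbT ifN //.
apply/exists_inP => [[T /setUP [/F_omax /negP // | /set1P ->]]].
by rewrite inE /=; lia.
Qed.

Section Vertex.
Variable S : vset.
Hypothesis S_in_F : S \in F.

Let S_vert : wvert n S.
Proof. exact: face_vert S_in_F. Qed.

Let S_omax : omax \notin S.
Proof. exact: F_omax. Qed.

Let card_S_omax : #|S :|: [set omax]| == 2 = false.
Proof. by rewrite setUC cardsU1 S_omax; case/wvertP: S_vert => _; lia. Qed.

Lemma wface_mapC : wface n.+1 (mapC F S).
Proof.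
rewrite mapC_raise //; apply: raise_face => //; first exact: wvert_succU1.
by move=> T; apply: (face_compat F_face).
Qed.

Lemma wface_mapD : wface n.+1 (mapD F S).
Proof.
apply: wfaceU1 wface_mapC (wvert_succ S_vert) _ => y.
rewrite mapC_raise // => /raiseP [[T _ [ST ->]] | [yF _]].
  by rewrite /wcompat subsetU ?ST.
exact: (face_compat F_face).
Qed.

Lemma apex_mapC : apex (mapC F S) = S :|: [set omax].
Proof. by rewrite mapC_raise // apex_raise. Qed.

Lemma unlift_mapC : unlift (mapC F S) = F.
Proof. by rewrite mapC_raise // unlift_raise //; apply/setUidPl; rewrite sub1set. Qed.

Lemma apex_mapD : apex (mapD F S) = S :|: [set omax].
Proof.
rewrite -apex_mapC /apex; apply: eq_bigl => T; rewrite /mapD in_setU in_set1.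
by case: eqP => [-> | _]; rewrite ?(negbTE S_omax) ?andbF ?orbF.
Qed.

Lemma unlift_mapD : unlift (mapD F S) = F.
Proof.
rewrite /unlift imsetU imset_set1 setD1_id // -/(unlift _) unlift_mapC.
by apply/setUidPl; rewrite sub1set.
Qed.

Lemma kind_mapC : kind (mapC F S) = LC.
Proof.
rewrite /kind apex_mapC card_S_omax setU1_omaxK // mapC_raise // has_omax_raise.
by rewrite (negbTE (S_notin_raise F_omax S_omax)).
Qed.

Lemma kind_mapD : kind (mapD F S) = LD.
Proof.
rewrite /kind apex_mapD card_S_omax setU1_omaxK // /mapD inE set11 orbT.
by rewrite (has_omaxS (subsetUl _ _)) // mapC_raise // has_omax_raise.
Qed.

End Vertex.

Section Point.
Variable i : 'I_n.+2.
Hypothesis i_n : 2 <= i <= n.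

Let i_omax : omax \notin [set i].
Proof. by rewrite in_set1 eq_sym ord_omax. Qed.

Lemma wface_mapE : wface n.+1 (mapE F i).
Proof.
rewrite mapE_raise; apply: raise_face; rewrite ?wvert_pair // => T _.
exact: wcompat1.
Qed.

Lemma apex_mapE : apex (mapE F i) = [set i; omax].
Proof. by rewrite mapE_raise apex_raise. Qed.

Lemma unlift_mapE : unlift (mapE F i) = F :|: [set [set i]].
Proof. by rewrite mapE_raise unlift_raise. Qed.

Lemma kind_mapE : kind (mapE F i) = LE.
Proof. by rewrite /kind apex_mapE cards2 ord_omax // mapE_raise has_omax_raise. Qed.

End Point.
End Images.

Lemma mapB_inj (F1 F2 : {set vset}) :
  wface n F1 -> wface n F2 -> mapB F1 = mapB F2 -> F1 = F2.
Proof. by move=> F1f F2f; apply: setU1_inj; apply: ground_notin_face. Qed.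

Lemma mapC_inj (F1 : {set vset}) S1 F2 S2 :
  wface n F1 -> S1 \in F1 -> wface n F2 -> S2 \in F2 ->
  mapC F1 S1 = mapC F2 S2 -> F1 = F2 /\ S1 = S2.
Proof.
move=> F1f S1F1 F2f S2F2 e; split; first by rewrite -(unlift_mapC F1f S1F1) e unlift_mapC.
apply: (setU1_inj (face_omax F1f S1F1) (face_omax F2f S2F2)).
by rewrite -(apex_mapC F1f S1F1) -(apex_mapC F2f S2F2) e.
Qed.

Lemma mapD_inj (F1 : {set vset}) S1 F2 S2 :
  wface n F1 -> S1 \in F1 -> wface n F2 -> S2 \in F2 ->
  mapD F1 S1 = mapD F2 S2 -> F1 = F2 /\ S1 = S2.
Proof.
move=> F1f S1F1 F2f S2F2 e; split; first by rewrite -(unlift_mapD F1f S1F1) e unlift_mapD.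
apply: (setU1_inj (face_omax F1f S1F1) (face_omax F2f S2F2)).
by rewrite -(apex_mapD F1f S1F1) -(apex_mapD F2f S2F2) e.
Qed.

Lemma mapE_inj (F1 : {set vset}) (i1 : 'I_n.+2) F2 (i2 : 'I_n.+2) :
  wface n F1 -> 2 <= i1 <= n -> wface n F2 -> 2 <= i2 <= n ->
  mapE F1 i1 = mapE F2 i2 -> F1 = F2 /\ i1 = i2.
Proof.
move=> F1f i1_n F2f i2_n e.
have ei : i1 = i2.
  by apply: set2_omax_inj; rewrite // -(apex_mapE F1f i1_n) -(apex_mapE F2f i2_n) e.
split => //; apply: (@setU1_inj _ [set i1]); rewrite ?set1_notin_face //.
by rewrite -(unlift_mapE F1f i1_n) e (unlift_mapE F2f i2_n) ei.
Qed.

Lemma mapE_subset (F1 F2 : {set vset}) (i : 'I_n.+2) :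
  wface n F1 -> wface n F2 -> 2 <= i <= n -> (F1 \subset F2) = (mapE F1 i \subset mapE F2 i).
Proof.
move=> F1f F2f i_n; apply/idP/idP => [F12 | /(imsetS (fun T => T :\ omax))].
  by rewrite !mapE_raise raiseS.
rewrite -!/(unlift _) !unlift_mapE // => /subsetP F12; apply/subsetP => T TF1.
have /F12 /setUP [// | /set1P eT] : T \in F1 :|: [set [set i]] by rewrite inE TF1.
by move: TF1; rewrite eT (negbTE (set1_notin_face i F1f)).
Qed.

Lemma kind_inImage (l : label) (G : {set vset}) : inImage l G -> kind G = l.
Proof.
case: l => /=.
- by case=> F [Ff ->]; apply: kind_mapA.
- by case=> F [Ff ->]; apply: kind_mapB.
- by case=> F [S [Ff SF ->]]; apply: kind_mapC.
- by case=> F [S [Ff SF ->]]; apply: kind_mapD.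
- by case=> F [i [Ff i_n ->]]; apply: kind_mapE.
Qed.

Lemma wface_inImage (l : label) (G : {set vset}) : inImage l G -> wface n.+1 G.
Proof.
case: l => /=.
- by case=> F [Ff ->]; apply: wface_succ.
- by case=> F [Ff ->]; apply: wface_mapB.
- by case=> F [S [Ff SF ->]]; apply: wface_mapC.
- by case=> F [S [Ff SF ->]]; apply: wface_mapD.
- by case=> F [i [Ff i_n ->]]; apply: wface_mapE.
Qed.

Section Decomposition.
Variable G : {set vset}.
Hypothesis G_face : wface n.+1 G.

Let G_vert : {in G, forall T, wvert n.+1 T}.
Proof. exact: face_vert G_face. Qed.

Let G_compat : {in G &, forall T U, wcompat T U}.
Proof. exact: face_compat G_face. Qed.

Lemma kind_omax_free : ~~ has_omax G -> inImage (kind G) G.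
Proof.
move=> G_omax; have vert T : T \in G -> T != ground -> wvert n T.
  move=> TG Tground; have omaxT : omax \notin T.
    by apply: contra G_omax => omaxT; apply/exists_inP; exists T.
  rewrite -(setD1_id omaxT); apply: wvert_unlift; rewrite ?setD1_id ?G_vert //.
  by case/wvertP: (G_vert TG) => _ /andP [].
rewrite /kind (negbTE G_omax); case: ifP => groundG.
  exists (G :\ ground); split; last by rewrite /mapB setUC setD1K.
  apply/wfaceP; split => [T /setD1P [Tground TG] | T U /setD1P [_ TG] /setD1P [_ UG]].
    exact: vert.
  exact: G_compat.
exists G; split => //; apply/wfaceP; split => [T TG | ]; last exact: G_compat.
by apply: vert => //; apply: contraFneq groundG => <-.
Qed.

(* The vertices containing n+1 pairwise meet, so they form a chain, whose least element
   (of least cardinality) is the apex. *)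
Lemma apex_in_face : has_omax G -> apex G \in G /\ omax \in apex G.
Proof.
case/exists_inP => T0 T0G omaxT0; pose P T := (T \in G) && (omax \in T).
case: (@arg_minnP _ T0 P (fun T => #|T|)); first by rewrite /P T0G.
move=> M /andP [MG omaxM] Mmin.
suff -> : apex G = M by [].
apply: bigcap_least => [| T /[dup] PT /andP [TG omaxT]]; first by rewrite /P MG.
case/or3P: (G_compat MG TG) => [// | TM | dMT].
  by have /eqP -> : T == M by rewrite eqEcard TM Mmin.
by move: dMT; rewrite -setI_eq0 => /eqP /setP /(_ omax); rewrite !inE omaxM omaxT.
Qed.

Section Apex.
Hypothesis G_omax : has_omax G.
Local Notation stem := (apex G :\ omax).

Let apex_G : apex G \in G. Proof. by case: apex_in_face. Qed.
Let omax_apex : omax \in apex G. Proof. by case: apex_in_face. Qed.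

Lemma apex_stem : stem :|: [set omax] = apex G.
Proof. by rewrite setUC setD1K. Qed.

Lemma card_apex : #|apex G| = #|stem|.+1.
Proof. by rewrite (cardsD1 omax) omax_apex. Qed.

Lemma stem_omax : omax \notin stem.
Proof. by rewrite setD11. Qed.

Lemma stem_ground : stem \subset ground.
Proof. exact/wvert_setD1_ground/G_vert. Qed.

Lemma stem_neq0 : stem != set0.
Proof. by rewrite -card_gt0; case/wvertP: (G_vert apex_G) => _; rewrite card_apex; lia. Qed.

Lemma stem_sub (x : vset) : x :|: [set omax] \in G -> stem \subset x.
Proof. by move=> xG; rewrite subDset setUC apex_sub // omax_setU1. Qed.

Lemma stem_unique (x : vset) : x \in G -> omax \notin x -> stem \subset x -> x = stem.
Proof.
move=> xG x_omax stem_x; case/or3P: (G_compat xG apex_G) => [x_apex | apex_x | dx].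
- by apply/eqP; rewrite eqEsubset stem_x andbT subsetD1 x_apex.
- by move: x_omax; rewrite (subsetP apex_x).
- by move: dx; rewrite (negbTE (nondisjoint_sub stem_neq0 stem_x (subsetDl _ _))).
Qed.

Lemma ground_notin_G : ground \notin G.
Proof.
apply/negP => groundG; case/or3P: (G_compat groundG apex_G) => [ground_apex | apex_ground | dg].
- have : ground \subset stem by rewrite subsetD1 ground_apex inE /=; lia.
  move/subset_leq_card; rewrite card_ground; case/wvertP: (G_vert apex_G) => _.
  by rewrite card_apex; move: #|stem| => k; lia.
- by move: (subsetP apex_ground _ omax_apex); rewrite inE /=; lia.
- by move: dg; rewrite (negbTE (nondisjoint_sub stem_neq0 stem_ground (subsetDl _ _))).
Qed.

Lemma stem_in_unlift : stem \in unlift G.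
Proof. by apply/imsetP; exists (apex G). Qed.

Lemma unlift_vert (y : vset) : y \in unlift G -> y != stem -> wvert n y.
Proof.
case/imsetP => T TG -> T_stem; apply: wvert_unlift; first exact: G_vert.
  by apply: contraNneq ground_notin_G => <-.
case: (boolP (omax \in T)) => omaxT; last first.
  by rewrite setD1_id //; case/wvertP: (G_vert TG) => _ /andP [].
have : stem \proper T :\ omax by rewrite properEneq eq_sym T_stem setSD ?apex_sub.
by move/proper_card; have := stem_neq0; rewrite -card_gt0 => stem0 /(leq_ltn_trans stem0).
Qed.

Lemma unlift_compat : {in unlift G &, forall y z, wcompat y z}.
Proof. by move=> _ _ /imsetP [T TG ->] /imsetP [U UG ->]; apply/wcompatD1/G_compat. Qed.

Lemma wface_unlift_setD1 : wface n (unlift G :\ stem).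
Proof.
apply/wfaceP; split => [y /setD1P [y_stem yG] | y z /setD1P [_ yG] /setD1P [_ zG]].
  exact: unlift_vert.
exact: unlift_compat.
Qed.

Lemma wface_unlift : wvert n stem -> wface n (unlift G).
Proof.
move=> stem_vert; rewrite -(setD1K stem_in_unlift) setUC.
apply: wfaceU1 wface_unlift_setD1 stem_vert _ => y /setD1P [_ y_unlift].
exact: unlift_compat stem_in_unlift y_unlift.
Qed.

Lemma setD1_stem : G :\ stem = raise (unlift G) stem.
Proof.
apply/setP => x; rewrite mem_raise ?stem_omax //; last exact: unlift_omax.
case: ifP => x_omax; last first.
  rewrite in_setD1 mem_unlift ?x_omax //; case: (boolP (stem \subset x)) => stem_x.
    rewrite andbF; apply/negbTE/andP => [[x_stem xG]].
    by rewrite (stem_unique xG (negbT x_omax) stem_x) eqxx in x_stem.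
  rewrite (negbTE (contra (@stem_sub x) stem_x)) orbF andbT.
  by rewrite (_ : x != stem) //; apply: contraNneq stem_x => ->.
rewrite -[in LHS](setD1K x_omax) setUC.
move: (x :\ omax) (negbT (setD11 omax x)) => {x x_omax} y y_omax.
rewrite in_setD1 in_setU mem_unlift // in_set1.
rewrite (_ : y :|: [set omax] != stem) /=; last first.
  by apply: contraTneq (omax_setU1 y) => ->; rewrite stem_omax.
case yoG : (y :|: [set omax] \in G); first by rewrite orbT stem_sub.
apply/esym/negbTE/andP => [[y_G stem_y]].
suff y_stem : y = stem by rewrite y_stem apex_stem apex_G in yoG.
by case/orP: y_G => [/orP [yG | //] | /eqP //]; apply: stem_unique.
Qed.

Lemma kind_has_omax : inImage (kind G) G.
Proof.
rewrite /kind G_omax card_apex eqSS; case: eqP => [/eqP /cards1P [i stem_i] | card_stem].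
  have i_n : 2 <= i <= n.
    by have := subsetP stem_ground i; rewrite stem_i set11 inE => /(_ isT).
  exists (unlift G :\ stem), i; split => //; first exact: wface_unlift_setD1.
  rewrite mapE_raise -stem_i raise_setD1 -setD1_stem setD1_id //.
  by apply/negP => /G_vert /wvertP [_]; rewrite stem_i cards1.
have stem_vert : wvert n stem.
  apply: wvert_unlift (G_vert apex_G) _ _.
    by apply: contraTneq omax_apex => ->; rewrite inE /=; lia.
  by move: stem_neq0 card_stem; rewrite -card_gt0; move: #|stem| => k; lia.
case: ifP => stemG; exists (unlift G), stem; split; rewrite ?stem_in_unlift ?wface_unlift //.
  by rewrite /mapD mapC_raise ?stem_in_unlift // -setD1_stem setUC setD1K.
by rewrite mapC_raise ?stem_in_unlift // -setD1_stem setD1_id ?stemG.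
Qed.

End Apex.

Lemma kind_face : inImage (kind G) G.
Proof. by case: (boolP (has_omax G)) => [/kind_has_omax | /kind_omax_free]. Qed.

End Decomposition.

Lemma imgE_face (i : 'I_n.+2) : 2 <= i <= n ->
  forall G, imgE i G <-> wface n.+1 G /\ [set i; omax] \in G.
Proof.
move=> i_n G; split => [[F [Ff ->]] | [G_face iG]].
  by split; [apply: wface_mapE | rewrite /mapE !inE eqxx].
have G_omax : has_omax G by apply/exists_inP; exists [set i; omax]; rewrite // !inE eqxx orbT.
have apexE : apex G = [set i; omax].
  apply/eqP; rewrite eqEcard apex_sub ?inE ?eqxx ?orbT // cards2 ord_omax //.
  by case: (apex_in_face G_face G_omax) => /(face_vert G_face) /wvertP [_ /andP []].
have := kind_face G_face; rewrite /kind G_omax apexE cards2 ord_omax //.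
case=> F [j [Ff j_n eG]]; exists F; split => //; rewrite eG.
by rewrite -(set2_omax_inj i_n j_n) // -apexE eG apex_mapE.
Qed.

End Whitehouse.

Theorem mainTheorem4 (n : nat) (hn : 3 <= n) :
  (* injectivity *)
  [/\ (forall F1 F2 : {set {set 'I_n.+2}}, wface n F1 -> wface n F2 -> mapA F1 = mapA F2 -> F1 = F2),
      (forall F1 F2 : {set {set 'I_n.+2}}, wface n F1 -> wface n F2 -> mapB F1 = mapB F2 -> F1 = F2),
      (forall (F1 : {set {set 'I_n.+2}}) (S1 : {set 'I_n.+2}) F2 S2, wface n F1 -> S1 \in F1 -> wface n F2 -> S2 \in F2 ->
          mapC F1 S1 = mapC F2 S2 -> F1 = F2 /\ S1 = S2),
      (forall (F1 : {set {set 'I_n.+2}}) (S1 : {set 'I_n.+2}) F2 S2, wface n F1 -> S1 \in F1 -> wface n F2 -> S2 \in F2 ->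
          mapD F1 S1 = mapD F2 S2 -> F1 = F2 /\ S1 = S2) &
      (forall (F1 : {set {set 'I_n.+2}}) (i1 : 'I_n.+2) F2 (i2 : 'I_n.+2),
          wface n F1 -> 2 <= i1 <= n -> wface n F2 -> 2 <= i2 <= n ->
          mapE F1 i1 = mapE F2 i2 -> F1 = F2 /\ i1 = i2)]
  /\
  (* images are faces of Delta_{n+1} *)
  (forall l G, @inImage n l G -> wface n.+1 G)
  /\
  (* every face of Delta_{n+1} lies in one of the images ... *)
  (forall G : {set {set 'I_n.+2}}, wface n.+1 G -> exists l, @inImage n l G)
  /\
  (* ... and the images are pairwise disjoint *)
  (forall l1 l2 G, @inImage n l1 G -> @inImage n l2 G -> l1 = l2)
  /\
  (forall i : 'I_n.+2, 2 <= i <= n ->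
     (* image of E(-,i) = faces of Delta_{n+1} containing the vertex {i,n+1} *)
     (forall G, imgE i G <-> (wface n.+1 G /\ [set i; ord_max] \in G))
     /\
     (* poset isomorphism with the face poset of Delta_n *)
     (exists phi : {set {set 'I_n.+2}} -> {set {set 'I_n.+2}},
        [/\ (forall F : {set {set 'I_n.+2}}, wface n F -> imgE i (phi F)),
            (forall G, imgE i G -> exists F, wface n F /\ phi F = G) &
            (forall F1 F2 : {set {set 'I_n.+2}}, wface n F1 -> wface n F2 ->
               (F1 \subset F2) = (phi F1 \subset phi F2))])
     /\
     (* upper order ideal in the face poset of Delta_{n+1} *)
     (forall G H, imgE i G -> wface n.+1 H -> G \subset H -> imgE i H)).
Proof.
split; first by split; [move=> F1 F2 _ _ | exact: mapB_inj | exact: mapC_inj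
                       | exact: mapD_inj | exact: mapE_inj].
split; first exact: wface_inImage.
split; first by move=> G /(kind_face hn); exists (kind G).
split; first by move=> l1 l2 G /(kind_inImage hn) <- /(kind_inImage hn).
move=> i i_n; split; first exact: imgE_face.
split.
  exists (fun F => mapE F i); split => [F Ff | G [F [Ff ->]] | F1 F2 F1f F2f].
  - by exists F.
  - by exists F.
  - exact: mapE_subset.
move=> G H /(imgE_face hn i_n) [_ iG] H_face GH.
by apply/(imgE_face hn i_n); split; last exact: subsetP GH _ iG.
Qed.
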